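(* Let $\{G(n)\}$ be a sequence of random intersection graphs with $\mathbb E\,Y(n)^2=O(1)$ and $m(n)\to\infty$. Then with probability tending to $1$, for every pair of distinct attributes $w',w''\in W$ there are at most two vertices $v$ with $\{w',w''\}\subseteq S_v$.
   Context: Random intersection graph: given positive integers $n,m$ and a probability measure $P$ on $\{0,\dots,m\}$, $G(n,m,P)$ has vertex set $V=[n]$ and attribute set $W=\{w_1,\dots,w_m\}$; independent random subsets $S_1,\dots,S_n\subseteq W$ with $\mathbb P(S_v=S)=P(|S|)/\binom{m}{|S|}$; distinct $u,v$ adjacent iff $S_u\cap S_v\ne\emptyset$. For a sequence $G(n)=G(n,m(n),P(n))$, $X(n)$ has law $P(n)$ and $Y(n)=(n/m)^{1/2}X(n)$. *)

From Stdlib Require Import Reals List Arith Lia.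
Import ListNotations.
Open Scope R_scope.

(* A subset of the attribute set W = {w_0,...,w_{m-1}} is encoded as a
   list of m booleans (entry i = true iff w_i belongs to the subset). *)
Fixpoint all_subsets (m : nat) : list (list bool) :=
  match m with
  | O => [[]]
  | S m' => map (cons true) (all_subsets m') ++ map (cons false) (all_subsets m')
  end.

Fixpoint all_configs (n m : nat) : list (list (list bool)) :=
  match n with
  | O => [[]]
  | S n' => flat_map (fun s => map (cons s) (all_configs n' m)) (all_subsets m)
  end.

Definition card (s : list bool) : nat := length (filter (fun b => b) s).

(* P(S_v = S) = P(|S|) / binom(m, |S|) *)
Definition subset_weight (m : nat) (P : nat -> R) (s : list bool) : R :=
  P (card s) / C m (card s).

Definition config_weight (m : nat) (P : nat -> R) (cfg : list (list bool)) : R :=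
  fold_right Rmult 1 (map (subset_weight m P) cfg).

Definition prob (n m : nat) (P : nat -> R) (E : list (list bool) -> bool) : R :=
  fold_right Rplus 0
    (map (fun cfg => if E cfg then config_weight m P cfg else 0) (all_configs n m)).

Definition pair_degree (cfg : list (list bool)) (i j : nat) : nat :=
  length (filter (fun s => andb (nth i s false) (nth j s false)) cfg).

Definition pairs_at_most_two (m : nat) (cfg : list (list bool)) : bool :=
  forallb (fun i => forallb (fun j =>
     implb (Nat.ltb i j) (Nat.leb (pair_degree cfg i j) 2)) (seq 0 m)) (seq 0 m).

Definition is_prob_on (m : nat) (P : nat -> R) : Prop :=
  (forall k, (k <= m)%nat -> 0 <= P k) /\ sum_f_R0 P m = 1.

(* E Y^2 = (n/m) E X^2, with X ~ P. *)
Definition EY2 (n m : nat) (P : nat -> R) : R :=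
  (INR n / INR m) * sum_f_R0 (fun k => INR k ^ 2 * P k) m.

(* Write p = P(w_i, w_j ∈ S_v) for two distinct attributes w_i, w_j.  Counting
   the subsets of size k that contain both attributes gives
     p = Σ_k P(k) C(m-2,k-2)/C(m,k) = Σ_k P(k) k(k-1)/(m(m-1)) <= E X² / (m(m-1)),
   so the expected number of vertices containing the pair is
     n p <= (n/m) E X² / (m-1) = E Y² / (m-1) <= K / (m-1).
   Since the S_v are independent, the number D of such vertices satisfies
   P(D >= r) <= (n p)^r (induction on n, conditioning on the first vertex).
   A union bound over the fewer than m² pairs gives
     P(some pair is shared by three vertices) <= m² (K/(m-1))³ <= 4K³/(m-1),
   which tends to 0 because m(n) -> ∞. *)

From Stdlib Require Import Reals List Lia Lra Bool.
Open Scope R_scope.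

Notation config := (list (list bool)).

(* Binomial coefficients in nat by Pascal's rule.  Unlike the real-valued
   [C n k] of the standard library, [binom n k] vanishes for k > n, which lets
   the subset counts below be stated uniformly. *)
Fixpoint binom (n k : nat) : nat :=
  match n, k with
  | _, O => 1%nat
  | O, S _ => 0%nat
  | S n', S k' => (binom n' k' + binom n' (S k'))%nat
  end.

Lemma binom_gt n k : (n < k)%nat -> binom n k = 0%nat.
Proof.
  revert k; induction n as [|n IH]; intros [|k] Hk; simpl; try lia.
  rewrite !IH; lia.
Qed.

Lemma binom_diag n : binom n n = 1%nat.
Proof. induction n as [|n IH]; simpl; auto. rewrite IH, binom_gt; lia. Qed.

Lemma binom_pos n k : (k <= n)%nat -> (1 <= binom n k)%nat.
Proof.
  revert k; induction n as [|n IH]; intros [|k] Hk; simpl; try lia.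
  specialize (IH k); lia.
Qed.

Lemma C_binom n k : (k <= n)%nat -> C n k = INR (binom n k).
Proof.
  assert (C_0 : forall n, C n 0 = 1).
  { intro n'. unfold C. rewrite Nat.sub_0_r. simpl. field. apply INR_fact_neq_0. }
  assert (C_diag : forall n, C n n = 1).
  { intro n'. unfold C. rewrite Nat.sub_diag. simpl. field. apply INR_fact_neq_0. }
  revert k; induction n as [|n IH]; intros [|k] Hk.
  - apply C_0.
  - lia.
  - apply C_0.
  - simpl binom. rewrite plus_INR.
    destruct (Nat.eq_dec k n) as [->|Hkn].
    + rewrite C_diag, binom_diag, binom_gt by lia. simpl; ring.
    + rewrite <- pascal by lia. rewrite !IH by lia. reflexivity.
Qed.

Lemma C_pos n k : (k <= n)%nat -> 0 < C n k.
Proof.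
  intro Hk. rewrite C_binom by exact Hk. apply lt_0_INR.
  pose proof (binom_pos n k Hk); lia.
Qed.

(* Pascal's rule inside a weighted sum: splitting according to whether the
   first attribute is chosen. *)
Lemma binom_sum_pascal M (h : nat -> R) :
  sum_f_R0 (fun k => INR (binom (S M) k) * h k) (S M) =
  sum_f_R0 (fun k => INR (binom M k) * h (S k)) M +
  sum_f_R0 (fun k => INR (binom M k) * h k) M.
Proof.
  assert (Hext : sum_f_R0 (fun k => INR (binom M k) * h k) M =
                 sum_f_R0 (fun k => INR (binom M k) * h k) (S M)).
  { rewrite tech5, (binom_gt M (S M)) by lia. simpl; ring. }
  rewrite Hext, !(decomp_sum _ (S M)) by lia. simpl Init.Nat.pred.
  assert (Hsplit : sum_f_R0 (fun i => INR (binom (S M) (S i)) * h (S i)) M =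
    sum_f_R0 (fun i => INR (binom M i) * h (S i) + INR (binom M (S i)) * h (S i)) M).
  { apply sum_eq; intros i _. simpl binom. rewrite plus_INR; ring. }
  rewrite Hsplit, plus_sum. replace (binom (S M) 0) with (binom M 0) by now destruct M.
  ring.
Qed.

Lemma binom_ratio M k : (k <= M)%nat ->
  INR (binom M k) / C (S (S M)) (S (S k)) =
  INR (S (S k)) * INR (S k) / (INR (S (S M)) * INR (S M)).
Proof.
  intro Hk. rewrite <- C_binom by exact Hk. unfold C.
  replace (S (S M) - S (S k))%nat with (M - k)%nat by lia.
  rewrite !fact_simpl, !mult_INR.
  pose proof (INR_fact_neq_0 M). pose proof (INR_fact_neq_0 k).
  pose proof (INR_fact_neq_0 (M - k)).
  assert (INR (S M) <> 0) by (apply not_0_INR; lia).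
  assert (INR (S (S M)) <> 0) by (apply not_0_INR; lia).
  assert (INR (S k) <> 0) by (apply not_0_INR; lia).
  assert (INR (S (S k)) <> 0) by (apply not_0_INR; lia).
  field. repeat split; assumption.
Qed.

Definition sumL {A} (f : A -> R) (l : list A) : R := fold_right Rplus 0 (map f l).

Lemma sumL_app {A} (f : A -> R) l1 l2 : sumL f (l1 ++ l2) = sumL f l1 + sumL f l2.
Proof. unfold sumL. induction l1; simpl; [ring|]. rewrite IHl1; ring. Qed.

Lemma sumL_map {A B} (f : B -> R) (g : A -> B) l :
  sumL f (map g l) = sumL (fun x => f (g x)) l.
Proof. unfold sumL; rewrite map_map; reflexivity. Qed.

Lemma sumL_ext {A} (f g : A -> R) l : (forall x, f x = g x) -> sumL f l = sumL g l.
Proof. intro H. unfold sumL. induction l; simpl; auto. rewrite IHl, H; auto. Qed.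

Lemma sumL_flat_map {A B} (f : B -> R) (g : A -> list B) l :
  sumL f (flat_map g l) = sumL (fun x => sumL f (g x)) l.
Proof. induction l; simpl; auto. rewrite sumL_app, IHl; reflexivity. Qed.

Lemma sumL_plus {A} (f g : A -> R) l : sumL (fun x => f x + g x) l = sumL f l + sumL g l.
Proof. unfold sumL. induction l; simpl; [ring|]. rewrite IHl; ring. Qed.

Lemma sumL_scal {A} (f : A -> R) a l : sumL (fun x => a * f x) l = a * sumL f l.
Proof. unfold sumL. induction l; simpl; [ring|]. rewrite IHl; ring. Qed.

Lemma sumL_const {A} (c : R) (l : list A) : sumL (fun _ => c) l = INR (length l) * c.
Proof.
  unfold sumL. induction l; simpl length; [simpl; ring|].
  rewrite S_INR; simpl; rewrite IHl; ring.
Qed.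

Lemma sumL_zero {A} (l : list A) : sumL (fun _ => 0) l = 0.
Proof. rewrite sumL_const; ring. Qed.

Lemma sumL_le {A} (f g : A -> R) l :
  (forall x, In x l -> f x <= g x) -> sumL f l <= sumL g l.
Proof.
  unfold sumL. induction l; intro H; simpl; [lra|].
  apply Rplus_le_compat; [apply H; now left | apply IHl; intros; apply H; now right].
Qed.

Lemma sumL_nonneg {A} (f : A -> R) l : (forall x, In x l -> 0 <= f x) -> 0 <= sumL f l.
Proof.
  intro H. replace 0 with (sumL (fun _ : A => 0) l) at 1.
  - apply sumL_le; exact H.
  - rewrite sumL_const; ring.
Qed.

Lemma sum_subsets_S m (f : list bool -> nat -> R) :
  sumL (fun s => f s (card s)) (all_subsets (S m)) =
  sumL (fun s => f (true :: s) (S (card s))) (all_subsets m) +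
  sumL (fun s => f (false :: s) (card s)) (all_subsets m).
Proof. simpl all_subsets. rewrite sumL_app, !sumL_map; reflexivity. Qed.

(* There are C(m,k) subsets of size k. *)
Lemma sum_subsets_by_card m (g : nat -> R) :
  sumL (fun s => g (card s)) (all_subsets m) = sum_f_R0 (fun k => INR (binom m k) * g k) m.
Proof.
  revert g; induction m as [|m IH]; intro g.
  - unfold sumL, card; simpl; ring.
  - rewrite (sum_subsets_S m (fun _ k => g k)).
    rewrite (IH (fun k => g (S k))), IH, binom_sum_pascal. reflexivity.
Qed.

(* There are C(m,k) subsets of size k+1 of {w_0, ..., w_m} containing w_j. *)
Lemma sum_subsets_containing m j (g : nat -> R) : (j <= m)%nat ->
  sumL (fun s => if nth j s false then g (card s) else 0) (all_subsets (S m)) =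
  sum_f_R0 (fun k => INR (binom m k) * g (S k)) m.
Proof.
  revert j g; induction m as [|m IH]; intros j g Hj;
    rewrite (sum_subsets_S _ (fun s k => if nth j s false then g k else 0)).
  - destruct j; [|lia]. simpl nth.
    rewrite sumL_zero, (sum_subsets_by_card 0 (fun k => g (S k))). ring.
  - destruct j as [|j]; simpl nth.
    + rewrite sumL_zero, (sum_subsets_by_card (S m) (fun k => g (S k))). ring.
    + rewrite (IH j (fun k => g (S k))), (IH j g) by lia.
      rewrite (binom_sum_pascal m (fun k => g (S k))). reflexivity.
Qed.

(* There are C(m,k) subsets of size k+2 of {w_0, ..., w_{m+1}} containing
   both w_i and w_j (i < j). *)
Lemma sum_subsets_containing_pair m i j (g : nat -> R) : (i < j)%nat -> (j <= S m)%nat ->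
  sumL (fun s => if nth i s false && nth j s false then g (card s) else 0)
       (all_subsets (S (S m))) =
  sum_f_R0 (fun k => INR (binom m k) * g (S (S k))) m.
Proof.
  revert i j g; induction m as [|m IH]; intros i j g Hij Hj;
    rewrite (sum_subsets_S _ (fun s k => if nth i s false && nth j s false then g k else 0)).
  - destruct i, j; try lia. simpl nth. simpl andb.
    rewrite sumL_zero, (sum_subsets_containing 0 j (fun k => g (S k))) by lia. ring.
  - destruct i as [|i], j as [|j]; try lia; simpl nth; simpl andb.
    + rewrite sumL_zero, (sum_subsets_containing (S m) j (fun k => g (S k))) by lia. ring.
    + rewrite (IH i j (fun k => g (S k))), (IH i j g) by lia.
      rewrite (binom_sum_pascal m (fun k => g (S (S k)))). reflexivity.
Qed.

Lemma in_subsets_card m s : In s (all_subsets m) -> (card s <= m)%nat.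
Proof.
  revert s; induction m as [|m IH]; intros s Hs; simpl in Hs.
  - destruct Hs as [<-|[]]. unfold card; simpl; lia.
  - apply in_app_or in Hs.
    destruct Hs as [Hs|Hs]; apply in_map_iff in Hs; destruct Hs as [s' [<- Hs']];
      specialize (IH s' Hs'); unfold card in *; simpl; lia.
Qed.

Section FiniteModel.

Variables (m : nat) (P : nat -> R).
Hypothesis HP : is_prob_on m P.

Lemma subset_weight_nonneg s : In s (all_subsets m) -> 0 <= subset_weight m P s.
Proof.
  intro Hs. apply in_subsets_card in Hs. destruct HP as [HP0 _]. unfold subset_weight.
  apply Rmult_le_pos; [now apply HP0|]. left; apply Rinv_0_lt_compat, C_pos, Hs.
Qed.

Lemma subset_weight_total : sumL (subset_weight m P) (all_subsets m) = 1.
Proof.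
  unfold subset_weight. rewrite (sum_subsets_by_card m (fun k => P k / C m k)). destruct HP as [_ Htot]. rewrite <- Htot.
  apply sum_eq; intros k Hk. rewrite C_binom by exact Hk. field.
  apply not_0_INR. pose proof (binom_pos m k Hk); lia.
Qed.

Lemma config_weight_nonneg n c : In c (all_configs n m) -> 0 <= config_weight m P c.
Proof.
  revert c; induction n as [|n IH]; intros c Hc; simpl in Hc.
  - destruct Hc as [<-|[]]. unfold config_weight; simpl; lra.
  - apply in_flat_map in Hc. destruct Hc as [s [Hs Hc]].
    apply in_map_iff in Hc. destruct Hc as [c' [<- Hc']].
    unfold config_weight; simpl. fold (config_weight m P c').
    apply Rmult_le_pos; [apply subset_weight_nonneg | apply IH]; assumption.
Qed.

Lemma prob_sumL n (E : config -> bool) :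
  prob n m P E = sumL (fun c => if E c then config_weight m P c else 0) (all_configs n m).
Proof. reflexivity. Qed.

(* Conditioning on the attribute set of the first vertex (independence). *)
Lemma prob_S n E : prob (S n) m P E =
  sumL (fun s => subset_weight m P s * prob n m P (fun c => E (s :: c))) (all_subsets m).
Proof.
  rewrite prob_sumL. simpl all_configs. rewrite sumL_flat_map. apply sumL_ext; intro s.
  rewrite sumL_map, prob_sumL, <- sumL_scal. apply sumL_ext; intro c.
  unfold config_weight at 1. simpl. fold (config_weight m P c).
  destruct (E (s :: c)); ring.
Qed.

Lemma prob_ext n E E' : (forall c, E c = E' c) -> prob n m P E = prob n m P E'.
Proof. intro H. rewrite !prob_sumL. apply sumL_ext; intro c. now rewrite H. Qed.

Lemma prob_le n E E' : (forall c, E c = true -> E' c = true) -> prob n m P E <= prob n m P E'.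
Proof.
  intro H. rewrite !prob_sumL. apply sumL_le; intros c Hc.
  pose proof (config_weight_nonneg n c Hc). specialize (H c).
  destruct (E c); [rewrite H; auto; lra|]. destruct (E' c); lra.
Qed.

Lemma prob_nonneg n E : 0 <= prob n m P E.
Proof.
  rewrite prob_sumL. apply sumL_nonneg; intros c Hc.
  pose proof (config_weight_nonneg n c Hc). destruct (E c); lra.
Qed.

Lemma prob_total n : prob n m P (fun _ => true) = 1.
Proof.
  induction n as [|n IH].
  - unfold prob, config_weight; simpl; ring.
  - rewrite prob_S, <- subset_weight_total. apply sumL_ext; intro s. rewrite IH; ring.
Qed.

Lemma prob_le_1 n E : prob n m P E <= 1.
Proof. rewrite <- (prob_total n). apply prob_le; auto. Qed.

Lemma prob_compl n E : prob n m P E = 1 - prob n m P (fun c => negb (E c)).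
Proof.
  rewrite <- (prob_total n), !prob_sumL.
  enough (sumL (fun c => if true then config_weight m P c else 0) (all_configs n m) =
          sumL (fun c => if E c then config_weight m P c else 0) (all_configs n m) +
          sumL (fun c => if negb (E c) then config_weight m P c else 0) (all_configs n m))
    by lra.
  rewrite <- sumL_plus. apply sumL_ext; intro c. destruct (E c); simpl; ring.
Qed.

Lemma prob_forallb_fail {A} n (E : A -> config -> bool) (l : list A) :
  prob n m P (fun c => negb (forallb (fun x => E x c) l)) <=
  sumL (fun x => prob n m P (fun c => negb (E x c))) l.
Proof.
  induction l as [|x l IH]; simpl forallb.
  - rewrite prob_sumL, (sumL_ext _ (fun _ : config => 0)) by reflexivity.
    rewrite sumL_zero. unfold sumL; simpl; lra.
  - unfold sumL; simpl; fold (sumL (fun x => prob n m P (fun c => negb (E x c))) l).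
    enough (prob n m P (fun c => negb (E x c && forallb (fun y => E y c) l)) <=
            prob n m P (fun c => negb (E x c)) +
            prob n m P (fun c => negb (forallb (fun y => E y c) l))) by lra.
    rewrite !prob_sumL, <- sumL_plus. apply sumL_le; intros c Hc.
    pose proof (config_weight_nonneg n c Hc).
    destruct (E x c), (forallb (fun y => E y c) l); simpl; lra.
Qed.

End FiniteModel.

Definition has_pair (i j : nat) (s : list bool) : bool := nth i s false && nth j s false.

Definition pair_prob (m : nat) (P : nat -> R) (i j : nat) : R :=
  sumL (fun s => if has_pair i j s then subset_weight m P s else 0) (all_subsets m).

Lemma pair_degree_cons s c i j :
  pair_degree (s :: c) i j = if has_pair i j s then S (pair_degree c i j) else pair_degree c i j.
Proof. unfold pair_degree, has_pair. simpl. now destruct (nth i s false && nth j s false). Qed.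

Lemma pow_add_step x p r : 0 <= x -> 0 <= p -> p * x ^ r + x ^ S r <= (x + p) ^ S r.
Proof.
  intros Hx Hp. simpl. assert (x ^ r <= (x + p) ^ r) by (apply pow_incr; lra).
  assert (0 <= x ^ r) by (apply pow_le; exact Hx). nra.
Qed.

Section PairDegree.

Variables (m : nat) (P : nat -> R) (i j : nat).
Hypothesis HP : is_prob_on m P.

Lemma pair_prob_nonneg : 0 <= pair_prob m P i j.
Proof.
  apply sumL_nonneg; intros s Hs. pose proof (subset_weight_nonneg m P HP s Hs).
  destruct (has_pair i j s); lra.
Qed.

Definition pair_degree_ge (r : nat) (c : config) : bool := Nat.leb r (pair_degree c i j).

(* Conditioning on the first vertex: D >= r+1 among n+1 vertices requires either
   that the first vertex contains the pair and D >= r among the others, or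
   D >= r+1 among the others. *)
Lemma pair_degree_ge_step n r :
  prob (S n) m P (pair_degree_ge (S r)) <=
  pair_prob m P i j * prob n m P (pair_degree_ge r) + prob n m P (pair_degree_ge (S r)).
Proof.
  set (a := prob n m P (pair_degree_ge r)).
  set (b := prob n m P (pair_degree_ge (S r))).
  assert (Ha : 0 <= a) by apply (prob_nonneg m P HP).
  assert (Hb : 0 <= b) by apply (prob_nonneg m P HP).
  set (w := subset_weight m P).
  set (q := fun s => if has_pair i j s then w s else 0).
  assert (Hsum : pair_prob m P i j * a + b =
                 sumL (fun s => q s * a + w s * b) (all_subsets m)).
  { rewrite sumL_plus, (sumL_ext (fun s => q s * a) (fun s => a * q s)) by (intro; ring).
    rewrite (sumL_ext (fun s => w s * b) (fun s => b * w s)) by (intro; ring).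
    rewrite !sumL_scal. unfold w. rewrite (subset_weight_total m P HP).
    unfold pair_prob, q, w. ring. }
  rewrite prob_S, Hsum.
  apply sumL_le; intros s Hs. pose proof (subset_weight_nonneg m P HP s Hs).
  rewrite (prob_ext m P n _ (if has_pair i j s then pair_degree_ge r else pair_degree_ge (S r))).
  2:{ intro c. unfold pair_degree_ge. rewrite pair_degree_cons. now destruct (has_pair i j s). }
  unfold q, w. destruct (has_pair i j s); fold a b; nra.
Qed.

Lemma pair_degree_tail n r : prob n m P (pair_degree_ge r) <= (INR n * pair_prob m P i j) ^ r.
Proof.
  pose proof pair_prob_nonneg as Hp.
  revert r; induction n as [|n IH]; intros [|r].
  - unfold prob, config_weight; simpl; lra.
  - unfold prob, config_weight; simpl. rewrite Rmult_0_l, Rmult_0_l; lra.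
  - simpl pow. apply (prob_le_1 m P HP).
  - eapply Rle_trans; [apply pair_degree_ge_step|].
    rewrite S_INR, Rmult_plus_distr_r, Rmult_1_l.
    eapply Rle_trans; [|apply pow_add_step; [apply Rmult_le_pos; [apply pos_INR|] |]]; auto.
    apply Rplus_le_compat; [apply Rmult_le_compat_l|]; auto.
Qed.

End PairDegree.

(* Division of nonnegative reals (with the convention x / 0 = 0). *)
Lemma div_nonneg a b : 0 <= a -> 0 <= b -> 0 <= a / b.
Proof.
  intros Ha Hb. unfold Rdiv. destruct (Req_dec b 0) as [->|Hb0].
  - rewrite Rinv_0; lra.
  - apply Rmult_le_pos; [exact Ha | left; apply Rinv_0_lt_compat; lra].
Qed.

Lemma sum_f_R0_shift2 f n :
  sum_f_R0 f (S (S n)) = f 0%nat + f 1%nat + sum_f_R0 (fun k => f (S (S k))) n.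
Proof. induction n as [|n IH]; [simpl; ring|]. rewrite tech5, IH, tech5. ring. Qed.

Lemma pair_prob_factorial_moment M P i j : (i < j)%nat -> (j <= S M)%nat ->
  pair_prob (S (S M)) P i j * (INR (S (S M)) * INR (S M)) =
  sum_f_R0 (fun k => INR (S (S k)) * INR (S k) * P (S (S k))) M.
Proof.
  intros Hij Hj. unfold pair_prob, has_pair, subset_weight.
  rewrite (sum_subsets_containing_pair M i j (fun k => P k / C (S (S M)) k)) by assumption.
  rewrite Rmult_comm, scal_sum. apply sum_eq; intros k Hk.
  assert (INR (S M) <> 0) by (apply not_0_INR; lia).
  assert (INR (S (S M)) <> 0) by (apply not_0_INR; lia).
  replace (INR (binom M k) * (P (S (S k)) / C (S (S M)) (S (S k))) * (INR (S (S M)) * INR (S M)))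
    with (P (S (S k)) * (INR (binom M k) / C (S (S M)) (S (S k))) * (INR (S (S M)) * INR (S M)))
    by (unfold Rdiv; ring).
  rewrite binom_ratio by exact Hk. field. split; assumption.
Qed.

Lemma pair_prob_le_moment M P i j : is_prob_on (S (S M)) P -> (i < j)%nat -> (j <= S M)%nat ->
  pair_prob (S (S M)) P i j * (INR (S (S M)) * INR (S M)) <=
  sum_f_R0 (fun k => INR k ^ 2 * P k) (S (S M)).
Proof.
  intros [HP0 _] Hij Hj. rewrite pair_prob_factorial_moment, sum_f_R0_shift2 by assumption.
  assert (0 <= INR 0 ^ 2 * P 0%nat) by (apply Rmult_le_pos; [apply pow_le, pos_INR | apply HP0; lia]).
  assert (0 <= INR 1 ^ 2 * P 1%nat) by (apply Rmult_le_pos; [apply pow_le, pos_INR | apply HP0; lia]).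
  enough (sum_f_R0 (fun k => INR (S (S k)) * INR (S k) * P (S (S k))) M <=
          sum_f_R0 (fun k => INR (S (S k)) ^ 2 * P (S (S k))) M) by lra.
  apply sum_Rle; intros k Hk.
  assert (0 <= P (S (S k))) by (apply HP0; lia).
  rewrite (S_INR (S k)). pose proof (pos_INR (S k)). nra.
Qed.

Lemma expected_pair_degree_le n M P K i j : is_prob_on (S (S M)) P ->
  (i < j)%nat -> (j <= S M)%nat -> EY2 n (S (S M)) P <= K ->
  INR n * pair_prob (S (S M)) P i j <= K / INR (S M).
Proof.
  intros HP Hij Hj HK. unfold EY2 in HK.
  pose proof (pair_prob_le_moment M P i j HP Hij Hj) as Hmom.
  set (p := pair_prob (S (S M)) P i j) in *.
  assert (Hx : 0 < INR (S M)) by (apply lt_0_INR; lia).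
  assert (Hy : 0 < INR (S (S M))) by (apply lt_0_INR; lia).
  assert (Hn : 0 <= INR n / INR (S (S M))) by (apply div_nonneg; apply pos_INR).
  apply (Rmult_le_reg_r (INR (S M))); [exact Hx|].
  replace (K / INR (S M) * INR (S M)) with K by (field; lra).
  replace (INR n * p * INR (S M))
    with (INR n / INR (S (S M)) * (p * (INR (S (S M)) * INR (S M)))) by (field; lra).
  eapply Rle_trans; [|exact HK]. apply Rmult_le_compat_l; assumption.
Qed.

Lemma EY2_nonneg n m P : is_prob_on m P -> 0 <= EY2 n m P.
Proof.
  intros [HP0 _]. unfold EY2. apply Rmult_le_pos.
  - apply div_nonneg; apply pos_INR.
  - rewrite <- (Rmult_0_l (INR (S m))), <- sum_cte. apply sum_Rle; intros k Hk.
    apply Rmult_le_pos; [apply pow_le, pos_INR | apply HP0, Hk].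
Qed.

Lemma bad_pair_prob n M P K i j : is_prob_on (S (S M)) P -> (j < S (S M))%nat ->
  EY2 n (S (S M)) P <= K ->
  prob n (S (S M)) P (fun c => negb (implb (Nat.ltb i j) (Nat.leb (pair_degree c i j) 2)))
  <= (K / INR (S M)) ^ 3.
Proof.
  intros HP Hj HK. destruct (Nat.ltb_spec i j) as [Hij|Hij]; simpl implb.
  - eapply Rle_trans; [apply (prob_le _ _ HP _ _ (pair_degree_ge i j 3))|].
    { intros c Hc. apply negb_true_iff, Nat.leb_gt in Hc.
      unfold pair_degree_ge. apply Nat.leb_le. lia. }
    eapply Rle_trans; [apply pair_degree_tail; exact HP|]. apply pow_incr. split.
    + apply Rmult_le_pos; [apply pos_INR | apply pair_prob_nonneg; exact HP].
    + apply expected_pair_degree_le; auto; lia.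
  - rewrite prob_sumL, (sumL_ext _ (fun _ : config => 0)) by reflexivity.
    rewrite sumL_zero. apply pow_le, div_nonneg; [|apply pos_INR].
    eapply Rle_trans; [apply EY2_nonneg, HP | exact HK].
Qed.

(* With x = m-1 >= 1: m² (K/x)³ <= 4x² K³/x³ = 4K³/x. *)
Lemma union_bound_arith x K : 1 <= x -> 0 <= K ->
  (x + 1) * ((x + 1) * (K / x) ^ 3) <= 4 * K ^ 3 / x.
Proof.
  intros Hx HK.
  assert (Hz : 0 <= (K / x) ^ 3) by (apply pow_le, div_nonneg; lra).
  replace (4 * K ^ 3 / x) with (4 * x * x * (K / x) ^ 3) by (field; lra).
  assert ((x + 1) * (x + 1) <= 4 * x * x) by nra.
  nra.
Qed.

Lemma pairs_at_most_two_prob n M P K : is_prob_on (S (S M)) P -> EY2 n (S (S M)) P <= K ->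
  1 - 4 * K ^ 3 / INR (S M) <= prob n (S (S M)) P (pairs_at_most_two (S (S M))).
Proof.
  intros HP HK.
  assert (HK0 : 0 <= K) by (eapply Rle_trans; [apply EY2_nonneg, HP | exact HK]).
  assert (Hcount : INR (S (S M)) * (INR (S (S M)) * (K / INR (S M)) ^ 3) <= 4 * K ^ 3 / INR (S M)).
  { rewrite S_INR. apply union_bound_arith; [rewrite S_INR; pose proof (pos_INR M); lra | exact HK0]. }
  rewrite (prob_compl _ _ HP).
  enough (prob n (S (S M)) P (fun c => negb (pairs_at_most_two (S (S M)) c))
          <= INR (S (S M)) * (INR (S (S M)) * (K / INR (S M)) ^ 3)) by lra.
  unfold pairs_at_most_two.
  eapply Rle_trans; [apply (prob_forallb_fail (S (S M)) P HP n (fun i c => forallb (fun j =>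
      implb (Nat.ltb i j) (Nat.leb (pair_degree c i j) 2)) (seq 0 (S (S M)))))|].
  replace (INR (S (S M)) * (INR (S (S M)) * (K / INR (S M)) ^ 3)) with
    (sumL (fun _ => sumL (fun _ => (K / INR (S M)) ^ 3) (seq 0 (S (S M)))) (seq 0 (S (S M))))
    by (rewrite !sumL_const, length_seq; ring).
  apply sumL_le; intros i _.
  eapply Rle_trans; [apply (prob_forallb_fail (S (S M)) P HP n (fun j c =>
      implb (Nat.ltb i j) (Nat.leb (pair_degree c i j) 2)))|].
  apply sumL_le; intros j Hj. apply in_seq in Hj.
  apply bad_pair_prob; [exact HP | lia | exact HK].
Qed.

Lemma div_lt_of_lt_div a eps x : 0 <= a -> 0 < eps -> a / eps < x -> a / x < eps.
Proof.
  intros Ha He Hx. pose proof (div_nonneg a eps Ha (Rlt_le _ _ He)).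
  apply (Rmult_lt_reg_r x); [lra|].
  replace (a / x * x) with a by (field; lra).
  replace a with (a / eps * eps) at 1 by (field; lra).
  rewrite (Rmult_comm eps x). apply Rmult_lt_compat_r; assumption.
Qed.

Theorem mainTheorem17 (m : nat -> nat) (P : nat -> nat -> R)
  (Hm_pos : forall n, (1 <= m n)%nat)
  (HP : forall n, is_prob_on (m n) (P n))
  (HY2 : exists K N, forall n, (N <= n)%nat -> EY2 n (m n) (P n) <= K)
  (Hm_inf : forall M, exists N, forall n, (N <= n)%nat -> (M <= m n)%nat) :
  Un_cv (fun n => prob n (m n) (P n) (pairs_at_most_two (m n))) 1.
Proof.
  destruct HY2 as [K [N HK]].
  assert (HK0 : 0 <= K) by (eapply Rle_trans; [apply EY2_nonneg, HP | apply HK, le_n]).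
  intros eps Heps.
  assert (Hq : 0 <= 4 * K ^ 3 / eps) by (apply div_nonneg; [apply Rmult_le_pos, pow_le|]; lra).
  (* Once m(n) exceeds 4K³/eps + 1, the failure probability 4K³/(m-1) is below eps. *)
  destruct (INR_unbounded (4 * K ^ 3 / eps + 1)) as [M0 HM0].
  destruct (Hm_inf M0) as [N1 HN1].
  exists (Nat.max N N1). intros n Hn.
  assert (HmM : INR M0 <= INR (m n)) by (apply le_INR, HN1; lia).
  pose proof (HP n) as HPn. pose proof (HK n ltac:(lia)) as HKn.
  destruct (m n) as [|M']; [simpl in HmM; lra |].
  destruct M' as [|M]; [simpl in HmM; lra |].
  pose proof (pairs_at_most_two_prob n M (P n) K HPn HKn) as Hlow.
  pose proof (prob_le_1 _ _ HPn n (pairs_at_most_two (S (S M)))) as Hup.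
  assert (Hsmall : 4 * K ^ 3 / INR (S M) < eps).
  { rewrite S_INR in HmM.
    apply div_lt_of_lt_div; [apply Rmult_le_pos, pow_le | | ]; lra. }
  unfold R_dist. rewrite Rabs_left1 by lra. lra.
Qed.
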